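(* Let $G$ be a $6$-regular graph, $\mathcal S$ a canonical path partition of $G$, $P$ a path component, and $X=x_1x_2\cdots x_k$ with $k\ge 2$ a sequence of consecutive vertices of $P$, all in $V_2^b$, such that no vertex of $X$ is joined by a free edge to a dangerous vertex. Then $b(X)\le \frac23(k+2)$.
   Context: All graphs are finite, simple and undirected. A path partition of $G=(V,E)$ is a set of vertex-disjoint paths (single vertices allowed) covering $V$; its members are components. A component with $t\ge3$ vertices is a cycle component if the subgraph induced on its vertex set has a spanning cycle; a one-vertex component is an isolated vertex; every other component is a path component. A path partition is canonical if (1) it has the minimum number of components among all path partitions of $G$; (2) among those, it has the maximum number of cycle components; (3) it has no isolated vertices. Given a canonical path partition $\mathcal S$ of $G$: two vertices are path neighbors if they are consecutive on a path component. An edge of $G$ is a free edge unless it joins two path neighbors or has both endpoints in the same cycle component. $V_1$ is the set of end-vertices of path components together with all vertices of cycle components. The remaining vertices are classified by the first applicable rule: $V_2$: joined by a free edge to a vertex of $V_1$; $V_3$: both path neighbors lie in $V_2$; $V_4$: exactly one path neighbor lies in $V_2$; $V_5$: all others. $V_2^b$ is the set of vertices of $V_2$ having at least one path neighbor in $V_2$. A balanced edge is a free edge with one endpoint in $V_1$ and the other in $V_2$. A vertex of $V_2$ is moderate if it is incident to at least two balanced edges, at least one of whose other endpoints is an end-vertex of a path component; it is heavy if it is incident to at least three balanced edges whose other endpoints are end-vertices of path components. A vertex of $V_3$ is dangerous if one of its path neighbors is heavy and the other is moderate. For $Y\subseteq V_2$, $b(Y)$ is the sum, over all balanced edges $xy$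 with $x\in Y$ and $y\in V_1$, of $2/3$ if $y$ is an end-vertex of a path component, $1/|V(C)|$ if $y$ lies in a cycle component $C$ with $|V(C)|\le 6$, and $0$ if $y$ lies in a cycle component with at least $7$ vertices. *)

From HB Require Import structures.
From mathcomp Require Import all_boot all_order all_algebra.
Set Implicit Arguments. Unset Strict Implicit. Unset Printing Implicit Defensive.
Import Order.TTheory GRing.Theory Num.Theory.

Section PathPartition.
Variables (T : finType) (e : rel T).

Definition gpath (c : seq T) : bool :=
  if c is x :: c' then path e x c' else false.

Definition is_path_partition (S : seq (seq T)) : bool :=
  all gpath S && uniq (flatten S) && [forall v, v \in flatten S].

(* cycle component: >= 3 vertices and the induced subgraph on its vertex set
   has a spanning cycle (some ordering of its vertices is a cycle of e) *)
Definition is_cycle_comp (c : seq T) : bool :=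
  (3 <= size c) && has (cycle e) (permutations c).

Definition ncycles (S : seq (seq T)) : nat := count is_cycle_comp S.

Definition canonical_pp (S : seq (seq T)) : Prop :=
  [/\ is_path_partition S,
      (forall S', is_path_partition S' -> size S <= size S'),
      (forall S', is_path_partition S' -> size S' = size S ->
                  ncycles S' <= ncycles S)
    & all (fun c => 2 <= size c) S].

Variable S : seq (seq T).

Definition consec (c : seq T) (u v : T) : bool :=
  ((u, v) \in zip c (behead c)) || ((v, u) \in zip c (behead c)).

Definition pneigh (u v : T) : bool :=
  has (fun c => ~~ is_cycle_comp c && consec c u v) S.

Definition same_cyc (u v : T) : bool :=
  has (fun c => [&& is_cycle_comp c, u \in c & v \in c]) S.

Definition free_edge (u v : T) : bool :=
  [&& e u v, ~~ pneigh u v & ~~ same_cyc u v].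

Definition endv (v : T) : bool :=
  has (fun c => [&& ~~ is_cycle_comp c, v \in c &
                    (v == head v c) || (v == last v c)]) S.

Definition incyc (v : T) : bool :=
  has (fun c => is_cycle_comp c && (v \in c)) S.

Definition inV1 (v : T) : bool := endv v || incyc v.
Definition inV2 (v : T) : bool :=
  ~~ inV1 v && [exists w, free_edge v w && inV1 w].
Definition inV3 (v : T) : bool :=
  [&& ~~ inV1 v, ~~ inV2 v & [forall w, pneigh v w ==> inV2 w]].
Definition inV4 (v : T) : bool :=
  [&& ~~ inV1 v, ~~ inV2 v, ~~ inV3 v & #|[set w | pneigh v w && inV2 w]| == 1].
Definition inV5 (v : T) : bool :=
  [&& ~~ inV1 v, ~~ inV2 v, ~~ inV3 v & ~~ inV4 v].
Definition inV2b (v : T) : bool :=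
  inV2 v && [exists w, pneigh v w && inV2 w].

Definition balanced (x y : T) : bool :=
  free_edge x y && ((inV1 x && inV2 y) || (inV2 x && inV1 y)).

Definition moderate (v : T) : bool :=
  [&& inV2 v, 2 <= #|[set w | balanced v w]| &
      [exists w, balanced v w && endv w]].
Definition heavy (v : T) : bool :=
  inV2 v && (3 <= #|[set w | balanced v w && endv w]|).
Definition dangerous (v : T) : bool :=
  inV3 v && [exists p, exists q,
    [&& p != q, pneigh v p, pneigh v q, heavy p & moderate q]].

Definition cycsize (v : T) : nat :=
  sumn [seq size c | c <- S & is_cycle_comp c && (v \in c)].

Local Open Scope ring_scope.

Definition bweight (y : T) : rat :=
  if endv y then 2%:R / 3%:R
  else if incyc y && (cycsize y <= 6)%N then (cycsize y)%:R^-1 else 0.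

Definition bval (Y : seq T) : rat :=
  \sum_(x <- Y) \sum_(y | balanced x y && inV1 y) bweight y.

End PathPartition.

(* Let [u v] be consecutive vertices of [X] and [s], [t] the ends of [P], with
   [u] on the side of [s]. If [u] is adjacent to [t], or to a vertex of [V1]
   on another component, [P] can be cut between [u] and [v] and re-glued
   through that edge so that [v] becomes the end of a path, on the same
   vertices. As [S] is canonical, a balanced edge [v w] can then neither reach
   a further component, nor join the end of another path, nor close a cycle.
   Hence: if [u] sees [t], all balanced edges at [v] go to [t] (and
   symmetrically for [s]); if [u] sees the end [y] of another path, [u] and
   [v] see only [y]; and if [u] and [v] see cycle vertices off [P], these lie
   on one cycle [C] on which the neighbours of [u] avoid the successors of
   those of [v], so their weights sum to at most 1. A vertex of [X] has at
   most four free edges, of weight 2/3 at [s] and [t] and at most 1/3 at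
   cycles. So in the second case every vertex of [X] has weight 2/3, and
   otherwise the constraints propagate along [X] an invariant bounding the
   excess of the partial sums of [b] over 2/3 per vertex by 4/3. *)

From HB Require Import structures.
From mathcomp Require Import all_boot all_order all_algebra.
From mathcomp Require Import ring lra.
Set Implicit Arguments. Unset Strict Implicit. Unset Printing Implicit Defensive.
Import Order.TTheory GRing.Theory Num.Theory.

Section SeqFacts.
Variable T : eqType.
Implicit Types (x y u v : T) (s : seq T).

Lemma head_rev x s : head x (rev s) = last x s.
Proof. by case/lastP: s => // s y; rewrite rev_rcons last_rcons. Qed.

Lemma last_rev x s : last x (rev s) = head x s.
Proof. by case: s => // y s; rewrite rev_cons last_rcons. Qed.

Lemma head_nonnil x y s : s != [::] -> head x s = head y s.
Proof. by case: s. Qed.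

Lemma last_nonnil x y s : s != [::] -> last x s = last y s.
Proof. by case/lastP: s => // s z; rewrite !last_rcons. Qed.

Lemma seq1_last x s : (size s <= 1)%N -> s != [::] -> s = [:: last x s].
Proof. by case: s => [|y [|]]. Qed.

Lemma rev_pair s1 s2 u v : rev (s1 ++ u :: v :: s2) = rev s2 ++ v :: u :: rev s1.
Proof. by rewrite rev_cat !rev_cons -!cats1 -!catA. Qed.

Lemma mem_pair s x : (2 <= size s)%N -> x \in s ->
  exists s1 s2 u v, s = s1 ++ u :: v :: s2 /\ (x = u \/ x = v).
Proof.
move=> hs xs; case/splitPr: xs hs => p1 [|v p2] hs; last by exists p1, p2, x, v; split; [|left].
case/lastP: p1 hs => [|p1 u] hs; first by [].
by exists p1, [::], u, x; rewrite cat_rcons; split; [|right].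
Qed.

Lemma mem_interior x s : x \in s -> x != head x s -> x != last x s ->
  exists s1 s2 u v, s = s1 ++ u :: x :: v :: s2.
Proof.
case/splitPr => p1 [|v p2]; first by rewrite last_cat eqxx.
case/lastP: p1 => [|p1 u]; first by rewrite eqxx.
by exists p1, p2, u, v; rewrite cat_rcons.
Qed.

Lemma mem_head_nonnil x s : s != [::] -> head x s \in s.
Proof. by case: s => // y s _; rewrite mem_head. Qed.

Lemma mem_last_nonnil x s : s != [::] -> last x s \in s.
Proof. by case/lastP: s => // s y _; rewrite last_rcons mem_rcons mem_head. Qed.

Lemma uniq_head_last x y s : uniq s -> (1 < size s)%N -> head x s != last y s.
Proof.
case: s => [|a [|b s]] //= /andP[aN _] _.
by apply: contraNneq aN => ->; apply: mem_last.
Qed.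

End SeqFacts.

Lemma path_of_pairs (A : Type) (r : rel A) x s :
  (forall s1 s2 u v, x :: s = s1 ++ u :: v :: s2 -> r u v) -> path r x s.
Proof.
elim: s x => [//|y s IH] x H /=; apply/andP; split; first exact: (H [::] s).
by apply: IH => s1 s2 u v E; apply: (H (x :: s1) s2); rewrite E.
Qed.

Lemma path_eq_const (A : eqType) (f : A -> bool) x s :
  path (fun a b => f a == f b) x s -> {in x :: s, forall z, f z = f x}.
Proof.
elim: s x => [|y s IH] x /=; first by move=> _ z; rewrite inE => /eqP ->.
case/andP => /eqP fxy ps z; rewrite inE => /orP[/eqP -> //|zs].
by rewrite (IH y ps z) ?fxy // inE zs orbT.
Qed.

Lemma card_add_le_next (T : finType) (r : seq T) (A B : {set T}) : uniq r ->
  {subset A <= r} -> {subset B <= r} -> [disjoint A & [set next r y | y in B]] ->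
  (#|A| + #|B| <= size r)%N.
Proof.
move=> ur Ar Br dis; have /card_uniqP <- := ur.
rewrite -(card_imset B (can_inj (prev_next ur))) -cardsUI (disjoint_setI0 dis) cards0 addn0.
apply: subset_leq_card; apply/subsetP => z /setUP[/Ar //|/imsetP[y /Br yr ->]].
by rewrite mem_next.
Qed.

Lemma sumr_const_seq (V : nmodType) (I : Type) (s : seq I) (c : V) :
  (\sum_(i <- s) c = c *+ size s)%R.
Proof. by rewrite big_const_seq count_predT iter_addr_0. Qed.

Lemma sumr_cond_pred1 (I : finType) (R : pzSemiRingType) (b : bool) (a : I) (F : I -> R) :
  (\sum_(i | b && (i == a)) F i = b%:R * F a)%R.
Proof. by case: b; rewrite ?mul1r ?mul0r ?big_pred1_eq ?big_pred0. Qed.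

Section Gpath.
Variables (T : finType) (e : rel T).
Hypothesis esym : symmetric e.
Implicit Types (x y w : T) (R O : seq T).

Lemma gpath_rev R : gpath e (rev R) = gpath e R.
Proof.
case: R => [|x R] //=.
rewrite lastI rev_rcons /= rev_path.
by apply: eq_path => a b; rewrite esym.
Qed.

Lemma gpath_cat R w O : gpath e R -> gpath e (w :: O) -> e (last w R) w ->
  gpath e (R ++ w :: O).
Proof. by case: R => [//|x R] /= gR gO eR; rewrite cat_path gR /= eR. Qed.

Lemma gpath_catl R1 R2 : R1 != [::] -> gpath e (R1 ++ R2) -> gpath e R1.
Proof. by case: R1 => //= x R1 _; rewrite cat_path => /andP[]. Qed.

Lemma gpath_catr R1 y R2 : gpath e (R1 ++ y :: R2) -> gpath e (y :: R2).
Proof. by case: R1 => //= x R1; rewrite cat_path => /andP[_] /= /andP[]. Qed.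

Lemma gpath_mid R1 R2 x y : gpath e (R1 ++ x :: y :: R2) -> e x y.
Proof.
case: R1 => [|z R1] /=; first by case/andP.
by rewrite cat_path => /andP[_] /= /and3P[_ ->].
Qed.

Lemma gpath_cycle x R : gpath e R -> e (last x R) (head x R) -> cycle e R.
Proof. by case: R => [//|y R] /= gR; rewrite rcons_path gR. Qed.

Lemma open_cycle r x : cycle e r -> uniq r -> x \in r ->
  exists O, [/\ perm_eq (x :: O) r, gpath e (x :: O) & last x O = prev r x].
Proof.
move=> cr ur /rot_to [i O Hrot].
exists O; split.
- by rewrite -Hrot perm_rot.
- have : cycle e (rot i r) by rewrite rot_cycle.
  by rewrite Hrot /= rcons_path => /andP[].
- have /andP[xO _] : uniq (x :: O) by rewrite -Hrot rot_uniq.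
  by rewrite -(prev_rot i ur) Hrot prev_nth mem_head memNindex // -last_nth.
Qed.

End Gpath.

(** * Path partitions and exchanges *)

Section PathPartition.
Variables (T : finType) (e : rel T).
Implicit Types (S A B : seq (seq T)) (c : seq T).

Lemma flatten_uniq_comp S c1 c2 x : uniq (flatten S) ->
  c1 \in S -> c2 \in S -> x \in c1 -> x \in c2 -> c1 = c2.
Proof.
elim: S => //= c S IH; rewrite cat_uniq => /and3P[_ hc uS].
have disj c' : c' \in S -> x \in c' -> x \in c -> False.
  move=> c'S xc' xc; have xS : x \in flatten S by apply/flattenP; exists c'.
  by move/hasPn: hc => /(_ x xS); rewrite xc.
rewrite !inE => /orP[/eqP->|h1] /orP[/eqP->|h2] x1 x2 //.
- by case: (disj _ h2 x2 x1).
- by case: (disj _ h1 x1 x2).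
- exact: IH.
Qed.

Lemma flatten_uniq_mem S c : uniq (flatten S) -> c \in S -> uniq c.
Proof.
move=> uS /perm_to_rem /perm_flatten pS.
by move: uS; rewrite (perm_uniq pS) /= cat_uniq => /andP[].
Qed.

Lemma pp_flatten_uniq S : is_path_partition e S -> uniq (flatten S).
Proof. by case/andP => /andP[]. Qed.

Lemma pp_uniq S : is_path_partition e S -> uniq S.
Proof.
case/andP => /andP[gS uS] _; elim: S gS uS => //= c S IH /andP[gc gS].
rewrite cat_uniq => /and3P[_ hc uS]; rewrite IH // andbT; apply/negP => cS.
case: c gc hc cS => // x c _ hc cS.
have xS : x \in flatten S by apply/flattenP; exists (x :: c); rewrite ?mem_head.
by move/hasPn: hc => /(_ x xS); rewrite mem_head.
Qed.

Lemma pp_cover S x : is_path_partition e S -> exists2 c, c \in S & x \in c.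
Proof. by case/andP => _ /forallP /(_ x) /flattenP [c cS xc]; exists c. Qed.

Lemma pp_gpath S c : is_path_partition e S -> c \in S -> gpath e c.
Proof. by case/andP => /andP[/allP gS _] _ /gS. Qed.

Lemma pp_comp_uniq S c : is_path_partition e S -> c \in S -> uniq c.
Proof. by move/pp_flatten_uniq; apply: flatten_uniq_mem. Qed.

Lemma pp_comp_eq S c1 c2 x : is_path_partition e S ->
  c1 \in S -> c2 \in S -> x \in c1 -> x \in c2 -> c1 = c2.
Proof. by move/pp_flatten_uniq; apply: flatten_uniq_comp. Qed.

(* [B] together with the components outside [A] is again a path partition. *)
Lemma canonical_exchange S A B : canonical_pp e S ->
  uniq A -> {subset A <= S} -> all (gpath e) B ->
  perm_eq (flatten B) (flatten A) ->
  (size A <= size B)%N /\ (size B = size A -> ncycles e B <= ncycles e A)%N.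
Proof.
case=> ppS minS maxS _ uA sAS gB pB.
set F := [seq c <- S | c \notin A].
have pS : perm_eq S (A ++ F).
  have pA : perm_eq [seq c <- S | c \in A] A.
    apply: uniq_perm; [exact/filter_uniq/pp_uniq | exact: uA |].
    by move=> c; rewrite mem_filter andb_idr //; apply: sAS.
  by rewrite perm_sym -(perm_cat2r F) in pA; rewrite perm_sym (permPl pA) perm_filterC.
have pBF : perm_eq (flatten (B ++ F)) (flatten S).
  rewrite (permPr (perm_flatten pS)) !flatten_cat perm_cat2r; exact: pB.
have ppBF : is_path_partition e (B ++ F).
  move: ppS => /andP[/andP[gS uS] cov].
  rewrite /is_path_partition (perm_uniq pBF) uS all_cat gB andbT /=.
  apply/andP; split; last by apply/forallP => v; rewrite (perm_mem pBF) (forallP cov).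
  by rewrite all_filter; apply/allP => c cS; apply/implyP => _; apply: (allP gS).
have szS : size S = (size A + size F)%N by rewrite (perm_size pS) size_cat.
have ncS : ncycles e S = (ncycles e A + ncycles e F)%N.
  by rewrite /ncycles (permP pS) count_cat.
have := minS _ ppBF; have := maxS _ ppBF.
rewrite ncS szS size_cat /ncycles count_cat.
rewrite !leq_add2r => maxBF minBF; split => // eqBA.
by apply: maxBF; rewrite eqBA.
Qed.

End PathPartition.

Lemma consec_mid (T : finType) (s1 s2 : seq T) a b : consec (s1 ++ a :: b :: s2) a b.
Proof.
apply/orP; left; elim: s1 => [|x s1 IH] /=; first by rewrite mem_head.
by case: s1 IH => [|y s1] /= IH; rewrite inE IH orbT.
Qed.

Lemma consecC (T : finType) (c : seq T) a b : consec c a b = consec c b a.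
Proof. exact: orbC. Qed.

Lemma cycle_comp_span (T : finType) (e : rel T) c :
  is_cycle_comp e c -> exists2 r, perm_eq r c & cycle e r.
Proof. by case/andP => _ /hasP [r]; rewrite mem_permutations; exists r. Qed.

Section Components.
Variables (T : finType) (e : rel T) (S : seq (seq T)).
Hypothesis esym : symmetric e.
Hypothesis ppS : is_path_partition e S.

Lemma endv_comp y c : c \in S -> y \in c ->
  endv e S y = ~~ is_cycle_comp e c && ((y == head y c) || (y == last y c)).
Proof.
move=> cS yc; apply/hasP/idP => [[c' c'S /and3P[nc yc' h]]|/andP[nc h]].
  by rewrite -(pp_comp_eq ppS c'S cS yc' yc) nc h.
by exists c => //; rewrite nc yc h.
Qed.

Lemma incyc_comp y c : c \in S -> y \in c -> incyc e S y = is_cycle_comp e c.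
Proof.
move=> cS yc; apply/hasP/idP => [[c' c'S /andP[cc yc']]|cc].
  by rewrite -(pp_comp_eq ppS c'S cS yc' yc).
by exists c => //; rewrite cc yc.
Qed.

Lemma V1_path_end y P : P \in S -> ~~ is_cycle_comp e P -> y \in P -> inV1 e S y ->
  (y == head y P) || (y == last y P).
Proof.
move=> PS Pnc yP; rewrite /inV1 (incyc_comp PS yP) (negbTE Pnc) orbF.
by rewrite (endv_comp PS yP) Pnc.
Qed.

Lemma V1_orient y Q : Q \in S -> y \in Q -> inV1 e S y ->
  exists O, [/\ perm_eq (y :: O) Q, gpath e (y :: O) &
     (~~ is_cycle_comp e Q -> forall z, z \in Q -> inV1 e S z -> z = y \/ z = last y O)].
Proof.
move=> QS yQ y1; have gQ := pp_gpath ppS QS.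
case cQ: (is_cycle_comp e Q).
  have [r pr cr] := cycle_comp_span cQ.
  have ur : uniq r by rewrite (perm_uniq pr) (pp_comp_uniq ppS QS).
  have yr : y \in r by rewrite (perm_mem pr).
  have [O [pO gO _]] := open_cycle cr ur yr.
  by exists O; split => //; apply: perm_trans pO pr.
have nc : ~~ is_cycle_comp e Q by rewrite cQ.
have ends z : z \in Q -> inV1 e S z -> z = head z Q \/ z = last z Q.
  by move=> zQ /(V1_path_end QS nc zQ) /orP[] /eqP; [left|right].
case: Q QS yQ gQ nc ends {cQ} => [//|q Q] QS yQ gQ nc ends.
case: (ends y yQ y1) => /= ey; first by subst y; exists Q.
have hr : rev (q :: Q) = y :: rev (belast q Q) by rewrite lastI rev_rcons ey.
exists (rev (belast q Q)); split.
- by rewrite -[y :: _]hr perm_rev.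
- by rewrite -[path _ _ _]/(gpath e (y :: _)) -[y :: _]hr gpath_rev.
- move=> _ z zQ z1; case: (ends z zQ z1) => /= ->; last by left.
  by right; case: (Q) ey => [|a Q'] ey; rewrite last_rev //= ey.
Qed.

End Components.

Section Exchange.
Variables (T : finType) (e : rel T) (S : seq (seq T)).
Hypothesis esym : symmetric e.
Hypothesis canS : canonical_pp e S.

Let ppS : is_path_partition e S. Proof. by case: canS. Qed.

(* The components [A] are rearranged into the paths [R :: B]; since [S] is
   canonical, the edge from the end of [R] to [w] in [V1] can neither be used
   to save a component nor to close [R] into a cycle. *)
Variables (A B : seq (seq T)) (R : seq T) (w : T).
Hypotheses (uA : uniq A) (sAS : {subset A <= S}).
Hypotheses (gR : gpath e R) (gB : all (gpath e) B).
Hypotheses (pRB : perm_eq (R ++ flatten B) (flatten A)) (szRB : (size B).+1 = size A).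
Hypotheses (eRw : e (last w R) w) (w1 : inV1 e S w).

Lemma exchange_V1_mem : w \in flatten A.
Proof.
apply/negPn/negP => wA; have [Q QS wQ] := pp_cover w ppS.
have QA : Q \notin A by apply: contra wA => QA; apply/flattenP; exists Q.
have [O [pO gO _]] := V1_orient esym ppS QS wQ w1.
have sQAS : {subset Q :: A <= S} by move=> c; rewrite inE => /predU1P[->|/sAS].
have gRO : all (gpath e) ((R ++ w :: O) :: B) by rewrite /= gB gpath_cat.
have pRO : perm_eq (flatten ((R ++ w :: O) :: B)) (flatten (Q :: A)).
  by rewrite /= -catA perm_catCA; apply: perm_cat.
have uQA : uniq (Q :: A) by rewrite /= QA uA.
have [+ _] := canonical_exchange canS uQA sQAS gRO pRO.
by rewrite /= -szRB ltnn.
Qed.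

Lemma exchange_V1_not_end R' : R' \in B -> w != head w R' /\ w != last w R'.
Proof.
move=> R'B; have gR' : gpath e R' by apply: (allP gB).
have joinable O : perm_eq O R' -> gpath e O -> w != head w O.
  case: O => [//|o O] pO gO /=; apply/negP => /eqP ow; subst o.
  set B' := (R ++ w :: O) :: rem R' B.
  have gB' : all (gpath e) B'.
    rewrite /= gpath_cat //; apply/allP => c /mem_rem; exact: (allP gB).
  have pB' : perm_eq (flatten B') (flatten A).
    apply: perm_trans pRB; rewrite /= -catA perm_cat2l.
    apply: (@perm_trans _ (flatten (R' :: rem R' B))); first exact: perm_cat.
    by rewrite perm_flatten // perm_sym perm_to_rem.
  have [+ _] := canonical_exchange canS uA sAS gB' pB'.
  by rewrite /= size_rem // -szRB prednK ?ltnn //; case: (B) R'B.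
split; first exact: joinable.
rewrite -head_rev; apply: joinable; first by rewrite perm_rev.
by rewrite gpath_rev.
Qed.

Lemma exchange_V1_not_head : ncycles e A = 0%N -> (3 <= size R)%N -> w != head w R.
Proof.
move=> nA sR; apply/negP => /eqP hw.
have cR : is_cycle_comp e R.
  rewrite /is_cycle_comp sR; apply/hasP; exists R; first by rewrite mem_permutations.
  by apply: (gpath_cycle (x := w)) gR _; rewrite -hw.
have gRB : all (gpath e) (R :: B) by rewrite /= gR gB.
have [_ +] := canonical_exchange canS uA sAS gRB pRB.
by rewrite /= szRB nA /ncycles /= cR => /(_ erefl).
Qed.

Lemma exchange_V1 :
  [/\ w \in flatten A,
      forall R', R' \in B -> w != head w R' /\ w != last w R'
    & ncycles e A = 0%N -> (3 <= size R)%N -> w != head w R].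
Proof.
split; [exact: exchange_V1_mem | exact: exchange_V1_not_end | exact: exchange_V1_not_head].
Qed.

End Exchange.

(** * Consecutive vertices of a path component *)

(* Orienting [P] either way lets every statement about consecutive vertices
   [u v] be applied to [v u] as well. *)
Definition orientation (T : eqType) (P D : seq T) := (D == P) || (D == rev P).

Lemma orientation_rev (T : eqType) (P D : seq T) :
  orientation P D -> orientation P (rev D).
Proof. by case/orP => /eqP ->; rewrite /orientation ?revK eqxx ?orbT. Qed.

Section Orientation.
Variables (T : finType) (e : rel T) (S : seq (seq T)).
Hypothesis esym : symmetric e.
Hypothesis ppS : is_path_partition e S.
Variables (P D : seq T).
Hypotheses (PS : P \in S) (Pnc : ~~ is_cycle_comp e P) (oD : orientation P D).

Lemma orientation_perm : perm_eq D P.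
Proof. by case/orP: oD => /eqP ->; rewrite ?perm_rev. Qed.

Lemma orientation_mem : D =i P.
Proof. exact: perm_mem orientation_perm. Qed.

Lemma orientation_uniq : uniq D.
Proof. by rewrite (perm_uniq orientation_perm) (pp_comp_uniq ppS PS). Qed.

Lemma orientation_gpath : gpath e D.
Proof. by case/orP: oD => /eqP ->; rewrite ?gpath_rev //; apply: pp_gpath PS. Qed.

Lemma orientation_V1_end w : w \in D -> inV1 e S w -> w = head w D \/ w = last w D.
Proof.
rewrite orientation_mem => wP /(V1_path_end ppS PS Pnc wP).
by case/orP: oD => /eqP -> /orP[] /eqP; rewrite ?head_rev ?last_rev; auto.
Qed.

Lemma orientation_pneigh D1 D2 a b : D = D1 ++ a :: b :: D2 -> pneigh e S a b.
Proof.
move=> hD; apply/hasP; exists P => //; rewrite Pnc /=.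
case/orP: oD => /eqP eD; first by rewrite -eD hD consec_mid.
by rewrite -[P]revK -eD hD rev_pair consecC consec_mid.
Qed.

Lemma orientation_endv z : z \in D -> (z == head z D) || (z == last z D) ->
  endv e S z.
Proof.
rewrite orientation_mem => zP; rewrite (endv_comp ppS PS zP) Pnc /=.
by case/orP: oD => /eqP ->; rewrite ?head_rev ?last_rev // orbC.
Qed.

End Orientation.

(* For [x] in [V2] these are the balanced edges at [x] counted by [bval]. *)
Definition bal_nbr (T : finType) (e : rel T) (S : seq (seq T)) (x y : T) :=
  free_edge e S x y && inV1 e S y.

Section Reroute.
Variables (T : finType) (e : rel T) (S : seq (seq T)).
Hypothesis esym : symmetric e.
Hypothesis canS : canonical_pp e S.
Variables (P D Pre Post : seq T) (u v : T).
Hypotheses (PS : P \in S) (Pnc : ~~ is_cycle_comp e P) (oD : orientation P D).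
Hypotheses (Ddef : D = Pre ++ u :: v :: Post).
Hypotheses (u1 : ~~ inV1 e S u) (v1 : ~~ inV1 e S v).

Let ppS : is_path_partition e S. Proof. by case: canS. Qed.
Let s := head u D.
Let t := last u D.

Let uD : u \in D. Proof. by rewrite Ddef mem_cat mem_head orbT. Qed.
Let vD : v \in D. Proof. by rewrite Ddef mem_cat !inE eqxx !orbT. Qed.

Let Pre_nonnil : Pre != [::].
Proof.
apply: contra u1 => /eqP Pre0; apply/orP; left.
by apply: (orientation_endv ppS PS Pnc oD uD); rewrite Ddef Pre0 eqxx.
Qed.

Let Post_nonnil : Post != [::].
Proof.
apply: contra v1 => /eqP Post0; apply/orP; left.
by apply: (orientation_endv ppS PS Pnc oD vD); rewrite Ddef Post0 last_cat eqxx orbT.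
Qed.

Let head_Pre x R : head x (Pre ++ R) = s.
Proof. by rewrite /s Ddef; case: (Pre) Pre_nonnil. Qed.

Let last_Post : last v Post = t.
Proof. by rewrite /t Ddef last_cat. Qed.

Let gpath_D : gpath e ((Pre ++ [:: u]) ++ v :: Post).
Proof. by rewrite -catA /= -Ddef; exact: (orientation_gpath esym ppS PS oD). Qed.

Let gpath_Pre : gpath e (Pre ++ [:: u]).
Proof. by apply: gpath_catl gpath_D; case: (Pre). Qed.

Let V1_in_D w : w \in P -> inV1 e S w -> w = s \/ w = t.
Proof.
rewrite -(orientation_mem oD) => wD /(orientation_V1_end ppS PS Pnc oD wD).
by rewrite /s /t !(head_nonnil w u, last_nonnil w u) // Ddef; case: (Pre).
Qed.

Let perm_D : perm_eq D P. Proof. exact: orientation_perm oD. Qed.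

Let rev_Post : rev (v :: Post) = t :: rev (belast v Post).
Proof. by rewrite lastI rev_rcons last_Post. Qed.

Let gpath_rev_Post : gpath e (t :: rev (belast v Post)).
Proof. by rewrite -rev_Post gpath_rev ?(gpath_catr gpath_D). Qed.

Lemma reroute_last w : e u t -> bal_nbr e S v w -> w = t.
Proof.
move=> eut /andP[/and3P[evw _ _] w1].
set R := (Pre ++ [:: u]) ++ rev (v :: Post).
have gR : gpath e R by rewrite /R rev_Post gpath_cat ?last_cat.
have pR : perm_eq (R ++ flatten [::]) (flatten [:: P]).
  rewrite /= !cats0; apply: perm_trans perm_D.
  by rewrite /R Ddef -catA perm_cat2l /= perm_cons perm_rev.
have eRw : e (last w R) w by rewrite /R last_cat last_rev /=.
have uP : uniq [:: P] by [].
have sPS : {subset [:: P] <= S} by move=> c; rewrite inE => /eqP ->.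
have [+ _ +] := exchange_V1 esym canS (B := [::]) uP sPS gR isT pR erefl eRw w1.
rewrite /= cats0 => /V1_in_D /(_ w1) [] // -> /(_ _ _)/negP[] //.
- by rewrite /ncycles /= (negbTE Pnc).
- rewrite /R !size_cat size_rev /= addn1 addnS ltnS addSn ltnS.
  by case: (Pre) Pre_nonnil.
- by rewrite /R -catA head_Pre.
Qed.

Section OtherComponent.
Variables (Q O : seq T) (q : T).
Hypotheses (QS : Q \in S) (QP : Q != P) (pO : perm_eq (q :: O) Q) (gO : gpath e (q :: O)).

Lemma reroute_comp w : e u q -> bal_nbr e S v w ->
  [/\ (w \in P) || (w \in Q), w != last q O, w != s &
      (~~ is_cycle_comp e Q -> w != t)].
Proof.
move=> euq /andP[/and3P[evw npvw _] w1].
set R := rev (v :: Post).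
set R1 := rev (q :: O) ++ u :: rev Pre.
have gR : gpath e R by rewrite /R rev_Post.
have gR1 : gpath e R1.
  apply: gpath_cat; first by rewrite gpath_rev.
    by rewrite -rev_rcons -cats1 gpath_rev.
  by rewrite last_rev esym.
have uA : uniq [:: P; Q] by rewrite /= inE eq_sym QP.
have sAS : {subset [:: P; Q] <= S} by move=> c; rewrite !inE => /orP[] /eqP ->.
have pA : perm_eq (R ++ flatten [:: R1]) (flatten [:: P; Q]).
  apply/permP => x; move: (permP pO x) (permP perm_D x).
  rewrite Ddef /R /R1 /= !cats0 !count_cat !count_rev /= count_rev => <- <-.
  ring.
have eRw : e (last w R) w by rewrite /R last_rev.
have gB : all (gpath e) [:: R1] by rewrite /= gR1.
have [wA /(_ R1 (mem_head _ _)) [wh wl] wt] :=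
  exchange_V1 esym canS uA sAS gR gB pA erefl eRw w1.
split.
- by move: wA; rewrite /= cats0 mem_cat.
- by move: wh; rewrite /R1 lastI rev_rcons.
- by move: wl; rewrite /R1 last_cat /= last_rev -[Pre]cats0 head_Pre.
move=> Qnc; apply/negP => /eqP wt'.
case: (ltnP 1 (size Post)) => [Post2|Post1].
  have nA : ncycles e [:: P; Q] = 0%N by rewrite /ncycles /= (negbTE Pnc) (negbTE Qnc).
  have sR : (3 <= size R)%N by rewrite /R size_rev.
  by move/negP: (wt nA sR); apply; rewrite /R rev_Post wt'.
have EP := seq1_last v Post1 Post_nonnil.
move/negP: npvw; apply; apply: (orientation_pneigh PS Pnc oD (D1 := Pre ++ [:: u]) (D2 := [::])).
by rewrite Ddef {1}EP last_Post wt' -catA.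
Qed.

End OtherComponent.

Lemma link_path_end a w : bal_nbr e S u a -> a \notin P -> ~~ incyc e S a ->
  bal_nbr e S v w -> w = a.
Proof.
move=> /andP[/and3P[eua _ _] a1] aP ia vw; have /andP[_ w1] := vw.
have [Q QS aQ] := pp_cover a ppS.
have QP : Q != P by apply: contraNneq aP => <-.
have Qnc : ~~ is_cycle_comp e Q by rewrite -(incyc_comp ppS QS aQ).
have [O [pO gO endsQ]] := V1_orient esym ppS QS aQ a1.
have [/orP[wP|wQ] wl ws wt] := reroute_comp QS QP pO gO eua vw.
  by case: (V1_in_D wP w1) => ew; [move: ws | move: (wt Qnc)]; rewrite ew eqxx.
by case: (endsQ Qnc w wQ w1) => // ew; move: wl; rewrite ew eqxx.
Qed.

Lemma link_cycle c C r w : bal_nbr e S u c -> C \in S -> c \in C ->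
  is_cycle_comp e C -> perm_eq r C -> cycle e r -> bal_nbr e S v w -> w \notin P ->
  w \in C /\ w != prev r c.
Proof.
move=> /andP[/and3P[euc _ _] _] CS cC Ccyc pr cr vw wP.
have CP : C != P by apply: contraNneq Pnc => <-.
have ur : uniq r by rewrite (perm_uniq pr) (pp_comp_uniq ppS CS).
have cr' : c \in r by rewrite (perm_mem pr).
have [O [pO gO <-]] := open_cycle cr ur cr'.
have [wPC wl _ _] := reroute_comp CS CP (perm_trans pO pr) gO euc vw.
by move: wPC; rewrite (negbTE wP).
Qed.

End Reroute.

(** * Weights *)

Section Weights.
Variables (T : finType) (e : rel T) (S : seq (seq T)).
Hypothesis ppS : is_path_partition e S.
Local Open Scope ring_scope.

Lemma cycsize_comp y C : C \in S -> y \in C -> is_cycle_comp e C ->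
  cycsize e S y = size C.
Proof.
move=> CS yC Ccyc; rewrite /cycsize.
have -> : [seq c <- S | is_cycle_comp e c && (y \in c)] = [:: C].
  rewrite -(filter_pred1_uniq (pp_uniq ppS) CS); apply: eq_in_filter => c cS /=.
  apply/andP/eqP => [[_ yc]|->]; [exact: pp_comp_eq ppS cS CS yc yC | by rewrite Ccyc yC].
by rewrite /= addn0.
Qed.

Lemma bweight_endv y : endv e S y -> bweight e S y = 2%:R / 3%:R.
Proof. by rewrite /bweight => ->. Qed.

Lemma bweight_cycle y C : C \in S -> y \in C -> is_cycle_comp e C ->
  bweight e S y = if (size C <= 6)%N then (size C)%:R^-1 else 0.
Proof.
move=> CS yC Ccyc; rewrite /bweight (endv_comp ppS CS yC) Ccyc /=.
by rewrite (incyc_comp ppS CS yC) Ccyc (cycsize_comp CS yC Ccyc).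
Qed.

Lemma bweight_ge0 y : 0 <= bweight e S y.
Proof. by rewrite /bweight; case: ifP => _; [|case: ifP => _; rewrite ?invr_ge0]. Qed.

Lemma bweight_incyc_le y : incyc e S y -> 3%:R * bweight e S y <= 1.
Proof.
move=> iy; have [C CS yC] := pp_cover y ppS.
have Ccyc : is_cycle_comp e C by rewrite -(incyc_comp ppS CS yC).
have C3 : (3 <= size C)%N by case/andP: Ccyc.
rewrite (bweight_cycle CS yC Ccyc); case: ifP => _; last by rewrite mulr0 ler01.
by rewrite ler_pdivrMr ?ltr0n ?(leq_trans _ C3) // mul1r ler_nat.
Qed.

End Weights.

Section InteriorDegree.
Variables (T : finType) (e : rel T) (S : seq (seq T)).
Hypothesis esym : symmetric e.
Hypothesis ppS : is_path_partition e S.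
Hypothesis reg6 : forall v : T, #|[set w | e v w]| = 6%N.
Variable P : seq T.
Hypotheses (PS : P \in S) (Pnc : ~~ is_cycle_comp e P).

(* Two of the six edges at an interior vertex of [P] join path neighbours. *)
Lemma card_bal_nbr_le4 x : x \in P -> inV2 e S x -> (#|[set y | bal_nbr e S x y]| <= 4)%N.
Proof.
move=> xP /andP[x1 _].
have : ~~ endv e S x by apply: contra x1 => ?; apply/orP; left.
rewrite (endv_comp ppS PS xP) Pnc negb_or => /andP[xh xl].
have [p1 [p2 [a [b hP]]]] := mem_interior xP xh xl.
have oP : orientation P P by rewrite /orientation eqxx.
have pa : pneigh e S x a.
  by rewrite /pneigh; apply/hasP; exists P => //; rewrite Pnc hP consecC consec_mid.
have pb : pneigh e S x b.
  by apply: (orientation_pneigh PS Pnc oP (D1 := rcons p1 a) (D2 := p2)); rewrite cat_rcons.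
have gP := pp_gpath ppS PS.
have eax : e x a by rewrite esym; apply: (gpath_mid (R1 := p1) (R2 := b :: p2)); rewrite -hP.
have exb : e x b by apply: (gpath_mid (R1 := rcons p1 a) (R2 := p2)); rewrite cat_rcons -hP.
have ab : a != b.
  apply/eqP => ab; have := pp_comp_uniq ppS PS.
  by rewrite hP ab cat_uniq /= !inE eqxx !orbT !andbF.
set E := [set w | e x w].
have sub : [set y | bal_nbr e S x y] \subset E :\ a :\ b.
  apply/subsetP => y; rewrite !inE => /andP[/and3P[exy npn _] _].
  by rewrite exy andbT; apply/andP; split; apply: contraNneq npn => ->.
have cE : #|E :\ a :\ b| = 4%N.
  have aE : a \in E by rewrite inE.
  have bE : b \in E :\ a by rewrite !inE eq_sym ab.
  have := cardsD1 a E; rewrite aE (cardsD1 b (E :\ a)) bE /E reg6.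
  by move=> [->].
by rewrite -cE subset_leq_card.
Qed.

End InteriorDegree.

Section WeightChain.
Local Open Scope ring_scope.
Variables (T : eqType) (sig tau : T -> bool) (W b : T -> rat).

Definition weight_split x :=
  [&& b x == 2%:R / 3%:R * (sig x)%:R + 2%:R / 3%:R * (tau x)%:R + W x,
      0 <= W x & 3%:R * W x + (sig x)%:R + (tau x)%:R <= 4%:R].

Definition chain_compatible x y :=
  [&& tau x ==> [&& tau y, ~~ sig y & W y == 0],
      sig y ==> [&& sig x, ~~ tau x & W x == 0] &
      (0 < W x) ==> (0 < W y) ==> (W x + W y <= 1)].

(* [G] is the excess over [2/3] per term of a prefix sum of [b], and [x] the
   last term of the prefix. *)
Definition excess_inv x (G : rat) : Prop :=
  [/\ sig x -> ~~ tau x -> W x = 0 -> G = 0,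
      tau x -> G <= 4%:R / 3%:R &
      ~~ tau x -> G <= 1%:R / 3%:R + W x /\ G <= 1].

Ltac close_case :=
  first [ match goal with H : is_true false |- _ => discriminate H end
        | match goal with H : is_true (~~ true) |- _ => discriminate H end
        | lra | (split; lra) | (apply/eqP; rewrite eq_le; apply/andP; split; lra) ].

Lemma excess_inv_first x : weight_split x -> excess_inv x (b x - 2%:R / 3%:R).
Proof.
case/and3P => /eqP -> W0 Wb; move: Wb.
by rewrite /excess_inv; case: (sig x); case: (tau x) => /= Wb; split; intros; close_case.
Qed.

Lemma excess_inv_step x y G : weight_split x -> weight_split y -> chain_compatible x y ->
  excess_inv x G -> excess_inv y (G + (b y - 2%:R / 3%:R)).
Proof.
case/and3P => _ Wx0 Wxb.
case/and3P => /eqP -> Wy0 Wyb /and3P[h1 h2 h3] [j1 j2 j3]; rewrite /excess_inv.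
case tx: (tau x) in h1 j2 j3 h2 Wxb.
  move: h1 => /= /and3P[ty sy /eqP wy].
  have j := j2 isT.
  rewrite (negbTE sy) ty wy /=; split; intros; close_case.
case sy: (sig y) in h2 Wyb *.
  move: h2 => /= /andP[sx /eqP wx].
  have G0 := j1 sx (negbT tx) wx.
  move: Wyb; case ty: (tau y) => /= Wyb; rewrite G0; split; intros; close_case.
have [j3a j3b] := j3 isT.
have [wx|wx] := eqVneq (W x) 0; have [wy|wy] := eqVneq (W y) 0.
- move: Wyb; case ty: (tau y) => /= Wyb; split; intros; close_case.
- move: Wyb; case ty: (tau y) => /= Wyb; split; intros; close_case.
- move: Wyb; case ty: (tau y) => /= Wyb; split; intros; close_case.
- have wxp : 0 < W x by rewrite lt_def wx Wx0.
  have wyp : 0 < W y by rewrite lt_def wy Wy0.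
  move: h3; rewrite wxp wyp /= => h3.
  move: Wyb; case ty: (tau y) => /= Wyb; split; intros; close_case.
Qed.

Lemma sum_le_chain x0 X : all weight_split (x0 :: X) -> path chain_compatible x0 X ->
  \sum_(x <- x0 :: X) b x <= 2%:R / 3%:R * (size X).+1%:R + 4%:R / 3%:R.
Proof.
move=> aV pX.
suff : excess_inv (last x0 X) (\sum_(x <- x0 :: X) (b x - 2%:R / 3%:R)).
  rewrite big_split /= sumrN sumr_const_seq -mulr_natr /= => -[_ j2 j3].
  case: (tau (last x0 X)) in j2 j3; first by have := j2 isT; lra.
  by have [_ h] := j3 isT; lra.
elim/last_ind: X aV pX => [|X y IH]; first by rewrite /= big_seq1 andbT => Vx _; exact: excess_inv_first.
rewrite -rcons_cons all_rcons rcons_path => /andP[Vy aV] /andP[pX cxy].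
rewrite big_rcons last_rcons /=; apply: excess_inv_step cxy (IH aV pX) => //.
by apply: (allP aV); apply: mem_last.
Qed.

End WeightChain.

Section BalancedWeights.
Variables (T : finType) (e : rel T) (S : seq (seq T)).
Local Open Scope ring_scope.

Definition bal_head (D : seq T) x := bal_nbr e S x (head x D).
Definition bal_last (D : seq T) x := bal_nbr e S x (last x D).
Definition bal_off (P : seq T) x :=
  \sum_(y | bal_nbr e S x y && (y \notin P)) bweight e S y.
Definition bal_weight x := \sum_(y | balanced e S x y && inV1 e S y) bweight e S y.

Lemma bvalE X : bval e S X = \sum_(x <- X) bal_weight x.
Proof. by []. Qed.

Lemma inV2_notV1 x : inV2 e S x -> ~~ inV1 e S x.
Proof. by case/andP. Qed.

Lemma inV2_bal_nbr x : inV2 e S x -> exists w, bal_nbr e S x w.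
Proof. by case/andP => _ /existsP[w]; exists w. Qed.

Lemma bal_weight_V2 x : inV2 e S x ->
  bal_weight x = \sum_(y | bal_nbr e S x y) bweight e S y.
Proof.
move=> x2; apply: eq_bigl => y; rewrite /balanced /bal_nbr x2 (negbTE (inV2_notV1 x2)).
by case: (inV1 e S y); rewrite /= ?andbT ?andbF ?orbF.
Qed.

Lemma bal_off_pos P x : 0 < bal_off P x ->
  exists2 c, bal_nbr e S x c && (c \notin P) & bweight e S c != 0.
Proof.
case: (pickP [pred c | [&& bal_nbr e S x c, c \notin P & bweight e S c != 0]]).
  by move=> c /and3P[xc cP bc]; exists c; rewrite ?xc ?cP.
move=> none; rewrite /bal_off big1 ?ltxx // => y /andP[xy yP].
by move: (none y); rewrite /= xy yP => /negbFE/eqP.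
Qed.

Hypothesis ppS : is_path_partition e S.

Lemma bal_off_cycle P x C : C \in S -> is_cycle_comp e C -> (size C <= 6)%N ->
  (forall y, bal_nbr e S x y -> y \notin P -> y \in C) ->
  bal_off P x = #|[set y | bal_nbr e S x y && (y \notin P)]|%:R / (size C)%:R.
Proof.
move=> CS Ccyc C6 inC; rewrite /bal_off (eq_bigr (fun _ => (size C)%:R^-1)).
  rewrite (eq_bigl (mem [set y | bal_nbr e S x y && (y \notin P)])) ?sumr_const.
    by rewrite mulr_natl.
  by move=> y; rewrite /= in_set.
by move=> y /andP[xy yP]; rewrite (bweight_cycle ppS CS (inC y xy yP) Ccyc) C6.
Qed.

End BalancedWeights.

Lemma bal_head_rev (T : finType) (e : rel T) (S : seq (seq T)) (D : seq T) x :
  bal_head e S (rev D) x = bal_last e S D x.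
Proof. by rewrite /bal_head head_rev. Qed.

Lemma bal_last_rev (T : finType) (e : rel T) (S : seq (seq T)) (D : seq T) x :
  bal_last e S (rev D) x = bal_head e S D x.
Proof. by rewrite /bal_last last_rev. Qed.

Section LastLink.
Variables (T : finType) (e : rel T) (S : seq (seq T)).
Hypothesis esym : symmetric e.
Hypothesis canS : canonical_pp e S.
Variables (P D Pre Post : seq T) (u v : T).
Hypotheses (PS : P \in S) (Pnc : ~~ is_cycle_comp e P) (oD : orientation P D).
Hypotheses (Ddef : D = Pre ++ u :: v :: Post) (u2 : inV2 e S u) (v2 : inV2 e S v).
Local Open Scope ring_scope.

Let ppS : is_path_partition e S. Proof. by case: canS. Qed.
Let D_nonnil : D != [::]. Proof. by rewrite Ddef; case: (Pre). Qed.

Lemma last_link_step : bal_last e S D u ->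
  [&& bal_last e S D v, ~~ bal_head e S D v & bal_off e S P v == 0].
Proof.
case/andP => /and3P[eut _ _] _.
have to_t w : bal_nbr e S v w -> w = last u D.
  exact: (reroute_last esym canS PS Pnc oD Ddef (inV2_notV1 u2) eut).
have [w0 vw0] := inV2_bal_nbr v2.
have lv : last v D = last u D by apply: last_nonnil.
have D2 : (1 < size D)%N by rewrite Ddef size_cat /= !addnS.
apply/and3P; split.
- by rewrite /bal_last lv -(to_t w0 vw0).
- apply/negP => /to_t; apply/eqP; rewrite -lv.
  exact: uniq_head_last (orientation_uniq ppS PS oD) D2.
- apply/eqP/big1 => y /andP[/to_t ->]; rewrite -(orientation_mem oD).
  by rewrite mem_last_nonnil.
Qed.

End LastLink.

Section AdjacentPair.
Variables (T : finType) (e : rel T) (S : seq (seq T)).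
Hypothesis esym : symmetric e.
Hypothesis canS : canonical_pp e S.
Variables (P D Pre Post : seq T) (u v : T).
Hypotheses (PS : P \in S) (Pnc : ~~ is_cycle_comp e P) (oD : orientation P D).
Hypotheses (Ddef : D = Pre ++ u :: v :: Post) (u2 : inV2 e S u) (v2 : inV2 e S v).
Local Open Scope ring_scope.

Let ppS : is_path_partition e S. Proof. by case: canS. Qed.
Let u1 := inV2_notV1 u2.
Let v1 := inV2_notV1 v2.
Let oR : orientation P (rev D). Proof. exact: orientation_rev. Qed.
Let Rdef : rev D = rev Post ++ v :: u :: rev Pre. Proof. by rewrite Ddef rev_pair. Qed.

Lemma head_link_step : bal_head e S D v ->
  [&& bal_head e S D u, ~~ bal_last e S D u & bal_off e S P u == 0].
Proof.
have := last_link_step esym canS PS Pnc oR Rdef v2 u2.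
by rewrite !bal_last_rev bal_head_rev.
Qed.

Lemma adjacent_end_link y : y \notin P -> ~~ incyc e S y ->
  bal_nbr e S u y || bal_nbr e S v y ->
  (forall w, bal_nbr e S u w = (w == y)) /\ (forall w, bal_nbr e S v w = (w == y)).
Proof.
move=> yP iy.
have fwd w : bal_nbr e S u y -> bal_nbr e S v w -> w = y.
  by move=> uy; apply: (link_path_end esym canS PS Pnc oD Ddef u1 v1 uy yP iy).
have bwd w : bal_nbr e S v y -> bal_nbr e S u w -> w = y.
  by move=> vy; apply: (link_path_end esym canS PS Pnc oR Rdef v1 u1 vy yP iy).
have only x z : (forall w, bal_nbr e S x w -> w = y) -> bal_nbr e S x z ->
    forall w, bal_nbr e S x w = (w == y).
  by move=> h xz w; apply/idP/eqP => [/h //|->]; rewrite -(h z xz).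
have [wu uwu] := inV2_bal_nbr u2; have [wv vwv] := inV2_bal_nbr v2.
case/orP => [uy|vy].
  have vy : bal_nbr e S v y by rewrite -(fwd wv uy vwv).
  by split; [apply: (only u y (bwd^~ vy) uy) | apply: (only v y (fwd^~ uy) vy)].
have uy : bal_nbr e S u y by rewrite -(bwd wu vy uwu).
by split; [apply: (only u y (bwd^~ vy) uy) | apply: (only v y (fwd^~ uy) vy)].
Qed.

Hypothesis u_off_cyc : forall y, bal_nbr e S u y -> y \notin P -> incyc e S y.

Lemma off_weights_le1 : 0 < bal_off e S P u -> 0 < bal_off e S P v ->
  bal_off e S P u + bal_off e S P v <= 1.
Proof.
move=> /bal_off_pos[c /andP[uc cP] bc] /bal_off_pos[c' /andP[vc' c'P] _].
have [C CS cC] := pp_cover c ppS.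
have Ccyc : is_cycle_comp e C by rewrite -(incyc_comp ppS CS cC) u_off_cyc.
have C6 : (size C <= 6)%N.
  by move: bc; rewrite (bweight_cycle ppS CS cC Ccyc); case: ifP => // _; rewrite eqxx.
have [r pr cr] := cycle_comp_span Ccyc.
have ur : uniq r by rewrite (perm_uniq pr) (pp_comp_uniq ppS CS).
have near_u z w : bal_nbr e S u z -> z \in C -> bal_nbr e S v w -> w \notin P ->
    w \in C /\ w != prev r z.
  by move=> uz zC; apply: (link_cycle esym canS PS Pnc oD Ddef u1 v1 uz CS zC Ccyc pr cr).
have vC w : bal_nbr e S v w -> w \notin P -> w \in C.
  by move=> vw wP; case: (near_u c w uc cC vw wP).
have uC w : bal_nbr e S u w -> w \notin P -> w \in C.
  move=> uw wP; have c'C := vC c' vc' c'P.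
  by case: (link_cycle esym canS PS Pnc oR Rdef v1 u1 vc' CS c'C Ccyc pr cr uw wP).
rewrite (bal_off_cycle ppS CS Ccyc C6 uC) (bal_off_cycle ppS CS Ccyc C6 vC) -mulrDl -natrD.
have C0 : (0 < size C)%N by case/andP: Ccyc => /(leq_trans _) ->.
rewrite ler_pdivrMr ?ltr0n // mul1r ler_nat -(perm_size pr).
apply: card_add_le_next => //.
- by move=> y; rewrite inE (perm_mem pr) => /andP[/uC].
- by move=> y; rewrite inE (perm_mem pr) => /andP[/vC].
apply/pred0P => z /=; apply/negP => /andP[]; rewrite inE => /andP[uz zP].
case/imsetP => y; rewrite inE => /andP[vy yP] ez.
by case: (near_u z y uz (uC z uz zP) vy yP); rewrite ez (prev_next ur) eqxx.
Qed.

Lemma adjacent_compatible :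
  chain_compatible (bal_head e S D) (bal_last e S D) (bal_off e S P) u v.
Proof.
apply/and3P; split; apply/implyP.
- exact: (last_link_step esym canS PS Pnc oD Ddef u2 v2).
- exact: head_link_step.
- by move=> Wu; apply/implyP; apply: off_weights_le1.
Qed.

End AdjacentPair.

Section OrientedBound.
Variables (T : finType) (e : rel T) (S : seq (seq T)).
Hypothesis esym : symmetric e.
Hypothesis canS : canonical_pp e S.
Hypothesis reg6 : forall v : T, #|[set w | e v w]| = 6%N.
Variables (P D L X M : seq T).
Hypotheses (PS : P \in S) (Pnc : ~~ is_cycle_comp e P) (oD : orientation P D).
Hypotheses (Ddef : D = L ++ X ++ M) (X2 : (2 <= size X)%N) (XV2 : all (inV2 e S) X).
Local Open Scope ring_scope.

Let ppS : is_path_partition e S. Proof. by case: canS. Qed.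
Let inV2_X x : x \in X -> inV2 e S x. Proof. exact: (allP XV2). Qed.
Let X_D x : x \in X -> x \in D. Proof. by rewrite Ddef !mem_cat => ->; rewrite orbT. Qed.

Let D2 : (1 < size D)%N.
Proof. by apply: leq_trans X2 _; rewrite Ddef !size_cat addnCA leq_addr. Qed.

Let X_cons : exists x0 X', X = x0 :: X'.
Proof. by case E: X X2 => [|x0 X'] // _; exists x0, X'. Qed.

Let adjacent X1 X2' u v : X = X1 ++ u :: v :: X2' ->
  [/\ D = (L ++ X1) ++ u :: v :: (X2' ++ M), inV2 e S u & inV2 e S v].
Proof.
move=> EX; split; first by rewrite Ddef EX -!catA.
- by apply: inV2_X; rewrite EX mem_cat mem_head orbT.
- by apply: inV2_X; rewrite EX mem_cat !inE eqxx !orbT.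
Qed.

Lemma bal_nbr_on_path x (F : T -> rat) : x \in D ->
  \sum_(y | bal_nbr e S x y && (y \in P)) F y =
  (bal_head e S D x)%:R * F (head x D) + (bal_last e S D x)%:R * F (last x D).
Proof.
move=> xD; have Dn : D != [::] by case: (D) xD.
have ht := uniq_head_last x x (orientation_uniq ppS PS oD) D2.
have hP : head x D \in P by rewrite -(orientation_mem oD) mem_head_nonnil.
have lP : last x D \in P by rewrite -(orientation_mem oD) mem_last_nonnil.
rewrite (bigID (pred1 (head x D))) [X in _ + X = _](bigID (pred1 (last x D))) /=.
rewrite [X in _ + (_ + X) = _]big1 ?addr0; last first.
  move=> y /andP[/andP[/andP[/andP[_ y1] yP] yh] yl].
  rewrite -(orientation_mem oD) in yP.
  case: (orientation_V1_end ppS PS Pnc oD yP y1) => ey; [move: yh | move: yl].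
    by rewrite ey (head_nonnil y x) ?eqxx.
  by rewrite ey (last_nonnil y x) ?eqxx.
congr (_ + _); rewrite -sumr_cond_pred1; apply: eq_bigl => y /=.
  by case: eqVneq => [->|_]; rewrite ?hP ?andbT ?andbF.
case: (eqVneq y (last x D)) => [->|_]; rewrite ?andbF //.
by rewrite lP eq_sym ht !andbT.
Qed.

Lemma weight_split_X x : x \in X ->
  (forall y, bal_nbr e S x y -> y \notin P -> incyc e S y) ->
  weight_split (bal_head e S D) (bal_last e S D) (bal_off e S P) (bal_weight e S) x.
Proof.
move=> xX off; have xD := X_D xX; have Dn : D != [::] by case: (D) xD.
have hE : endv e S (head x D).
  by apply: (orientation_endv ppS PS Pnc oD); rewrite ?mem_head_nonnil ?(head_nonnil _ x) ?eqxx.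
have lE : endv e S (last x D).
  by apply: (orientation_endv ppS PS Pnc oD); rewrite ?mem_last_nonnil ?(last_nonnil _ x) ?eqxx ?orbT.
have sumE (F : T -> rat) : \sum_(y | bal_nbr e S x y) F y =
    (bal_head e S D x)%:R * F (head x D) + (bal_last e S D x)%:R * F (last x D) +
    \sum_(y | bal_nbr e S x y && (y \notin P)) F y.
  by rewrite (bigID (fun y => y \in P)) /= (bal_nbr_on_path F xD).
apply/and3P; split.
- apply/eqP; rewrite bal_weight_V2 ?inV2_X // sumE (bweight_endv hE) (bweight_endv lE).
  by rewrite /bal_off; ring.
- by apply: sumr_ge0 => y _; apply: bweight_ge0.
have W3 : 3%:R * bal_off e S P x <= \sum_(y | bal_nbr e S x y && (y \notin P)) 1.
  rewrite mulr_sumr; apply: ler_sum => y /andP[xy yP].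
  exact: (bweight_incyc_le ppS (off y xy yP)).
have card4 : \sum_(y | bal_nbr e S x y) (1 : rat) <= 4%:R.
  rewrite (eq_bigl (mem [set y | bal_nbr e S x y])); last by move=> y; rewrite /= in_set.
  have xP : x \in P by rewrite -(orientation_mem oD).
  by rewrite sumr_const ler_nat (card_bal_nbr_le4 esym ppS reg6 PS Pnc xP (inV2_X xX)).
by move: card4; rewrite sumE !mulr1; lra.
Qed.

Lemma bval_single_end x y : x \in X -> bal_nbr e S x y -> y \notin P -> ~~ incyc e S y ->
  bval e S X <= 2%:R / 3%:R * ((size X)%:R + 2%:R).
Proof.
move=> xX xy yP iy.
have step X1 X2' u v : X = X1 ++ u :: v :: X2' -> bal_nbr e S u y || bal_nbr e S v y ->
    (forall w, bal_nbr e S u w = (w == y)) /\ (forall w, bal_nbr e S v w = (w == y)).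
  move=> EX; have [hD u2 v2] := adjacent EX.
  exact: (adjacent_end_link esym canS PS Pnc oD hD u2 v2 yP iy).
have [x0 [X' EX]] := X_cons.
have pX : path (fun a b => bal_nbr e S a y == bal_nbr e S b y) x0 X'.
  apply: path_of_pairs => X1 X2' u v E; rewrite -EX in E.
  case: (boolP (bal_nbr e S u y || bal_nbr e S v y)) => [/(step _ _ _ _ E) [-> ->]|].
    by rewrite !eqxx.
  by rewrite negb_or => /andP[/negbTE -> /negbTE ->].
have all_y z : z \in X -> bal_nbr e S z y.
  have xX' : x \in x0 :: X' by rewrite -EX.
  by rewrite EX => zX; rewrite (path_eq_const pX zX) -(path_eq_const pX xX').
have only_y z : z \in X -> forall w, bal_nbr e S z w = (w == y).
  move=> zX; have [X1 [X2' [u [v [E zuv]]]]] := mem_pair X2 zX.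
  have uX : u \in X by rewrite E mem_cat mem_head orbT.
  have uvy : bal_nbr e S u y || bal_nbr e S v y by rewrite all_y.
  have [hu hv] := step _ _ _ _ E uvy.
  by case: zuv => ->.
have endy : endv e S y by move: xy => /andP[_]; rewrite /inV1 (negbTE iy) orbF.
rewrite bvalE big_seq (eq_bigr (fun _ => 2%:R / 3%:R)) => [|z zX]; last first.
  rewrite bal_weight_V2 ?inV2_X // (eq_bigl (pred1 y)) ?big_pred1_eq ?bweight_endv //.
  exact: only_y.
by rewrite -big_seq sumr_const_seq -(mulr_natr _ (size X)); lra.
Qed.

Lemma bval_cycle_links :
  (forall x y, x \in X -> bal_nbr e S x y -> y \notin P -> incyc e S y) ->
  bval e S X <= 2%:R / 3%:R * ((size X)%:R + 2%:R).
Proof.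
move=> off; have [x0 [X' EX]] := X_cons.
have splitX : all (weight_split (bal_head e S D) (bal_last e S D) (bal_off e S P)
    (bal_weight e S)) (x0 :: X').
  by apply/allP => z; rewrite -EX => zX; apply: weight_split_X zX (off z ^~ zX).
have chainX : path (chain_compatible (bal_head e S D) (bal_last e S D) (bal_off e S P)) x0 X'.
  apply: path_of_pairs => X1 X2' u v E; rewrite -EX in E.
  have [hD u2 v2] := adjacent E.
  apply: (adjacent_compatible esym canS PS Pnc oD hD u2 v2).
  by move=> y uy; apply: off uy; rewrite E mem_cat mem_head orbT.
have := sum_le_chain splitX chainX; rewrite -EX -bvalE => /le_trans; apply.
by rewrite EX /=; lra.
Qed.

Lemma bval_oriented : bval e S X <= 2%:R / 3%:R * ((size X)%:R + 2%:R).
Proof.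
case: (boolP [exists x, exists y, [&& x \in X, bal_nbr e S x y, y \notin P & ~~ incyc e S y]]).
  by case/existsP => x /existsP[y /and4P[xX xy yP iy]]; apply: bval_single_end xX xy yP iy.
move/existsPn => none; apply: bval_cycle_links => x y xX xy yP.
by move/existsPn: (none x) => /(_ y); rewrite xX xy yP /= negbK.
Qed.

End OrientedBound.

Local Open Scope ring_scope.

Theorem lemma8 (T : finType) (e : rel T) (S : seq (seq T)) (P X : seq T) :
  symmetric e -> irreflexive e ->
  (forall v : T, #|[set w | e v w]| = 6%N) ->
  canonical_pp e S ->
  P \in S -> ~~ is_cycle_comp e P ->
  infix X P || infix (rev X) P ->
  (2 <= size X)%N ->
  all (inV2b e S) X ->
  (forall x y, x \in X -> free_edge e S x y -> ~~ dangerous e S y) ->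
  bval e S X <= 2%:R / 3%:R * ((size X)%:R + 2%:R).
Proof.
move=> esym _ reg6 canS PS Pnc XP X2 XV2b _.
have XV2 : all (inV2 e S) X by apply/allP => x /(allP XV2b) /andP[].
have [D oD XD] : exists2 D, orientation P D & infix X D.
  case/orP: XP => XP; [exists P | exists (rev P)]; rewrite /orientation ?eqxx ?orbT //.
  by rewrite -infix_revLR.
have [L [M Ddef]] := infixP XD.
exact: (bval_oriented esym canS reg6 PS Pnc oD Ddef X2 XV2).
Qed.
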